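(* There exist a subgroup $F$ of $\mathrm{SL}_3(\mathbb{Z})$ which is free on two generators, a linear form $f: \mathbb{Q}^3 \to \mathbb{Q}$ with rational coefficients, and a vector $u \in \mathbb{Q}^3$, such that for all $g \in F$: (1) $f(gu) \ge 0$, and (2) $f(gu) = 0$ if and only if $g = 1$. *)

From HB Require Import structures.
From mathcomp Require Import all_boot all_order all_algebra.
Set Implicit Arguments. Unset Strict Implicit. Unset Printing Implicit Defensive.
Import Order.TTheory GRing.Theory Num.Theory.
Local Open Scope ring_scope.

(* Words in two generators and their inverses: a letter is (index of the
   generator in 'I_2, inverted?). *)
Definition letter := ('I_2 * bool)%type.

Definition cancels (a b : letter) : bool := (a.1 == b.1) && (a.2 != b.2).

Definition reduced (w : seq letter) : bool := sorted (fun a b => ~~ cancels a b) w.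

Definition letter_mx (A : 'I_2 -> 'M[int]_3) (l : letter) : 'M[int]_3 :=
  if l.2 then invmx (A l.1) else A l.1.

Definition eval_word (A : 'I_2 -> 'M[int]_3) (w : seq letter) : 'M[int]_3 :=
  foldr (fun l M => letter_mx A l *m M) 1%:M w.

Definition in_SL3Z (M : 'M[int]_3) : Prop := \det M = 1.

Definition free_on_two (A : 'I_2 -> 'M[int]_3) : Prop :=
  forall w : seq letter, reduced w -> w != [::] -> eval_word A w != 1%:M.

Definition in_gen (A : 'I_2 -> 'M[int]_3) (g : 'M[int]_3) : Prop :=
  exists w : seq letter, g = eval_word A w.

Definition form_at (f : 'rV[rat]_3) (g : 'M[int]_3) (u : 'cV[rat]_3) : rat :=
  (f *m (map_mx (fun z : int => z%:~R : rat) g) *m u) 0 0.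

From mathcomp Require Import all_boot all_order all_algebra zify ring.
Import Order.TTheory GRing.Theory Num.Theory.
Local Open Scope ring_scope.
Set Implicit Arguments. Unset Strict Implicit. Unset Printing Implicit Defensive.

(* The generators are the symmetric squares of the shears [[1,3],[0,1]] and
   [[1,0],[3,1]], i.e. their action on (x^2, xy, y^2).  On Z^2 these shears
   play ping-pong: a reduced word starting with a letter of the first
   (resp. second) shear sends (1,1) to a vector (x,y) with |y| < |x|
   (resp. |x| < |y|) and with the sign of xy fixed by the exponent of that
   letter.  Take u = (1,1,1), the image of (1,1), and f the form
   (p,q,r) |-> p - 2q + r, so that f(x^2,xy,y^2) = (x-y)^2.  Then f(gu) > 0
   for every g given by a nonempty reduced word, while f(u) = 0; in
   particular no such g is the identity, so the group is free. *)

Section PingPong.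

Variables (T : Type) (act : letter -> T -> T) (region : letter -> pred T) (x0 : T).
Hypothesis region_base : forall l, region l (act l x0).
Hypothesis region_act : forall l l' x, ~~ cancels l l' -> region l' x -> region l (act l x).

Lemma ping_pong l w : reduced (l :: w) -> region l (foldr act x0 (l :: w)).
Proof.
elim: w l => [|l' w IHw] l; first by rewrite region_base.
by rewrite /reduced /= => /andP[/region_act + rw]; apply; apply: IHw.
Qed.

End PingPong.

Definition cons_reduce (l : letter) (w : seq letter) : seq letter :=
  if w is l' :: w' then (if cancels l l' then w' else l :: w) else [:: l].

Definition reduce (w : seq letter) : seq letter := foldr cons_reduce [::] w.

Lemma reduced_reduce w : reduced (reduce w).
Proof.
elim: w => [|l w] //=; case: (reduce w) => [|l' w'] //= rw.
case: ifP => [_ | /negbT ncl]; first exact: path_sorted rw.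
by rewrite /reduced /= ncl.
Qed.

Section WordReduction.

Variable A : 'I_2 -> 'M[int]_3.
Hypothesis A_unit : forall i, A i \in unitmx.

Lemma letter_mx_cancel l l' : cancels l l' -> letter_mx A l *m letter_mx A l' = 1%:M.
Proof.
case: l l' => i s [i' s'] /andP[/= /eqP <-].
by case: s; case: s' => //= _; rewrite /letter_mx /= ?mulVmx ?mulmxV.
Qed.

Lemma eval_reduce w : eval_word A (reduce w) = eval_word A w.
Proof.
elim: w => [|l w /= <-] //; case: (reduce w) => [|l' w'] //=.
by case: ifP => // cll'; rewrite mulmxA letter_mx_cancel // mul1mx.
Qed.

End WordReduction.

Definition mx33 (a b c d e f g h k : int) : 'M[int]_3 :=
  \matrix_(i, j) nth 0 (nth [::] [:: [:: a; b; c]; [:: d; e; f]; [:: g; h; k]] i) j.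

Definition col3 (p q r : int) : 'cV[int]_3 := \col_i nth 0 [:: p; q; r] i.

Lemma mul_mx33 a b c d e f g h k a' b' c' d' e' f' g' h' k' :
  mx33 a b c d e f g h k *m mx33 a' b' c' d' e' f' g' h' k' =
  mx33 (a * a' + b * d' + c * g') (a * b' + b * e' + c * h') (a * c' + b * f' + c * k')
       (d * a' + e * d' + f * g') (d * b' + e * e' + f * h') (d * c' + e * f' + f * k')
       (g * a' + h * d' + k * g') (g * b' + h * e' + k * h') (g * c' + h * f' + k * k').
Proof.
apply/matrixP => i j; rewrite !mxE !big_ord_recr big_ord0 /= !mxE /= add0r.
by case: i => [[|[|[|i]]] ?] //=; case: j => [[|[|[|j]]] ?].
Qed.

Lemma mul_mx33_col3 a b c d e f g h k p q r :
  mx33 a b c d e f g h k *m col3 p q r =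
  col3 (a * p + b * q + c * r) (d * p + e * q + f * r) (g * p + h * q + k * r).
Proof.
apply/matrixP => i j; rewrite !mxE !big_ord_recr big_ord0 /= !mxE /= add0r.
by case: i => [[|[|[|i]]] ?].
Qed.

Lemma mx33_1 : mx33 1 0 0 0 1 0 0 0 1 = 1%:M.
Proof.
apply/matrixP => i j; rewrite !mxE.
by case: i => [[|[|[|i]]] ?] //=; case: j => [[|[|[|j]]] ?].
Qed.

Lemma det_mx33_unitriangular d g h : \det (mx33 1 0 0 d 1 0 g h 1) = 1.
Proof.
rewrite det_trig; last first.
  apply/is_trig_mxP => i j; rewrite !mxE.
  by case: i => [[|[|[|i]]] ?] //=; case: j => [[|[|[|j]]] ?].
by rewrite !big_ord_recr big_ord0 /= !mxE /= !mul1r.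
Qed.

(* Symmetric squares of [[1,t],[0,1]] and [[1,0],[t,1]] in the basis x^2, xy, y^2. *)
Definition sym2_upper (t : int) : 'M[int]_3 := mx33 1 (2 * t) (t * t) 0 1 t 0 0 1.
Definition sym2_lower (t : int) : 'M[int]_3 := mx33 1 0 0 t 1 0 (t * t) (2 * t) 1.

Definition sym2 (v : int * int) : 'cV[int]_3 := col3 (v.1 * v.1) (v.1 * v.2) (v.2 * v.2).

Lemma sym2_upperE t x y : sym2_upper t *m sym2 (x, y) = sym2 (x + t * y, y).
Proof. by rewrite mul_mx33_col3 /sym2 /=; congr col3; ring. Qed.

Lemma sym2_lowerE t x y : sym2_lower t *m sym2 (x, y) = sym2 (x, y + t * x).
Proof. by rewrite mul_mx33_col3 /sym2 /=; congr col3; ring. Qed.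

Lemma sym2_upperD s t : sym2_upper s *m sym2_upper t = sym2_upper (s + t).
Proof. by rewrite mul_mx33; congr mx33; ring. Qed.

Lemma sym2_lowerD s t : sym2_lower s *m sym2_lower t = sym2_lower (s + t).
Proof. by rewrite mul_mx33; congr mx33; ring. Qed.

Lemma det_sym2_upper t : \det (sym2_upper t) = 1.
Proof.
have -> : sym2_upper t = (mx33 1 0 0 (2 * t) 1 0 (t * t) t 1)^T.
  apply/matrixP => i j; rewrite !mxE.
  by case: i => [[|[|[|i]]] ?] //=; case: j => [[|[|[|j]]] ?].
by rewrite det_tr det_mx33_unitriangular.
Qed.

Lemma det_sym2_lower t : \det (sym2_lower t) = 1.
Proof. exact: det_mx33_unitriangular. Qed.

Lemma mulmx1_invmx (M N : 'M[int]_3) : M *m N = 1%:M -> invmx M = N.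
Proof. by move=> MN; have [uM _] := mulmx1_unit MN; rewrite -[RHS](mulKmx uM) MN mulmx1. Qed.

Lemma invmx_sym2_upper t : invmx (sym2_upper t) = sym2_upper (- t).
Proof. by apply: mulmx1_invmx; rewrite sym2_upperD subrr -mx33_1 /sym2_upper mulr0. Qed.

Lemma invmx_sym2_lower t : invmx (sym2_lower t) = sym2_lower (- t).
Proof. by apply: mulmx1_invmx; rewrite sym2_lowerD subrr -mx33_1 /sym2_lower mulr0. Qed.

Definition shear_gen (i : 'I_2) : 'M[int]_3 := if i == ord0 then sym2_upper 3 else sym2_lower 3.

Lemma det_shear_gen i : \det (shear_gen i) = 1.
Proof. by rewrite /shear_gen; case: ifP; rewrite ?det_sym2_upper ?det_sym2_lower. Qed.

Definition letter_shift (l : letter) : int := if l.2 then -3 else 3.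

Definition shear (l : letter) (v : int * int) : int * int :=
  if l.1 == ord0 then (v.1 + letter_shift l * v.2, v.2) else (v.1, v.2 + letter_shift l * v.1).

Lemma letter_mx_sym2 l v : letter_mx shear_gen l *m sym2 v = sym2 (shear l v).
Proof.
case: l v => i s [x y]; rewrite /letter_mx /shear_gen /shear /letter_shift /=.
by case: (i == ord0); case: s; rewrite ?invmx_sym2_upper ?invmx_sym2_lower ?sym2_upperE ?sym2_lowerE.
Qed.

Lemma eval_word_sym2 w v : eval_word shear_gen w *m sym2 v = sym2 (foldr shear v w).
Proof. by elim: w => [|l w IHw] /=; rewrite ?mul1mx // -mulmxA IHw letter_mx_sym2. Qed.

Definition shear_region (l : letter) (v : int * int) : bool :=
  (if l.1 == ord0 then v.2 * v.2 < v.1 * v.1 else v.1 * v.1 < v.2 * v.2) &&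
  (if l.2 then v.1 * v.2 < 0 else 0 < v.1 * v.2).

Lemma shear_region_base l : shear_region l (shear l (1, 1)).
Proof. by case: l => [[[|[|i]] ?] []]. Qed.

Lemma shear_region_shear l l' v :
  ~~ cancels l l' -> shear_region l' v -> shear_region l (shear l v).
Proof.
case: l l' v => [[[|[|i]] ?] s] [[[|[|i']] ?] s'] [x y] //;
  rewrite /cancels /shear_region /shear /letter_shift /=;
  case: s; case: s' => //= _ /andP[??]; apply/andP; split; nia.
Qed.

Lemma shear_region_sqr_gt0 l v : shear_region l v -> 0 < (v.1 - v.2) ^+ 2.
Proof.
case: v => x y /andP[+ _] /=; rewrite lt0r sqr_ge0 sqrf_eq0 subr_eq0 andbT.
by case: ifP => _; apply: contraTneq => ->; rewrite ltxx.
Qed.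

Definition row3 (a b c : int) : 'rV[int]_3 := \row_j nth 0 [:: a; b; c] j.

Definition sqdiff_form : 'rV[int]_3 := row3 1 (-2) 1.
Definition base_point : 'cV[int]_3 := sym2 (1, 1).

Lemma sqdiff_form_sym2 v : (sqdiff_form *m sym2 v) 0 0 = (v.1 - v.2) ^+ 2.
Proof. by rewrite !mxE !big_ord_recr big_ord0 /= !mxE /=; ring. Qed.

Lemma sqdiff_form_word_gt0 w : reduced w -> w != [::] ->
  0 < (sqdiff_form *m (eval_word shear_gen w *m base_point)) 0 0.
Proof.
case: w => // l w rw _; rewrite eval_word_sym2 sqdiff_form_sym2.
exact: shear_region_sqr_gt0 (ping_pong shear_region_base shear_region_shear rw).
Qed.

Lemma sqdiff_form_base_point : (sqdiff_form *m base_point) 0 0 = 0.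
Proof. by rewrite sqdiff_form_sym2 subrr expr0n. Qed.

Lemma shear_gen_free : free_on_two shear_gen.
Proof.
move=> w rw nw; apply: contraTneq (sqdiff_form_word_gt0 rw nw) => ->.
by rewrite mul1mx sqdiff_form_base_point ltxx.
Qed.

Lemma form_at_intr (f : 'rV[int]_3) g (u : 'cV[int]_3) :
  form_at (map_mx intr f) g (map_mx intr u) = ((f *m (g *m u)) 0 0)%:~R.
Proof. by rewrite /form_at -mulmxA -!map_mxM mxE. Qed.

Theorem theorem7 :
  exists A : 'I_2 -> 'M[int]_3,
    (forall i, in_SL3Z (A i)) /\ free_on_two A /\
    exists (f : 'rV[rat]_3) (u : 'cV[rat]_3),
      forall g : 'M[int]_3, in_gen A g ->
        0 <= form_at f g u /\ (form_at f g u = 0 <-> g = 1%:M).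
Proof.
exists shear_gen; split; first exact: det_shear_gen.
split; first exact: shear_gen_free.
exists (map_mx intr sqdiff_form), (map_mx intr base_point) => g [w ->].
have unit_gen i : shear_gen i \in unitmx by rewrite unitmxE det_shear_gen unitr1.
rewrite form_at_intr -(eval_reduce unit_gen).
have [-> | nw] := eqVneq (reduce w) [::]; first by rewrite /= mul1mx sqdiff_form_base_point.
have rw := reduced_reduce w; have pos := sqdiff_form_word_gt0 rw nw.
split; first by rewrite ler0z ltW.
split=> [/eqP | eq1]; first by rewrite intr_eq0 (gt_eqF pos).
by have := shear_gen_free rw nw; rewrite eq1 eqxx.
Qed.
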